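(* Let $n\ge 3$ and let $M_n$ be the lattice consisting of $0$, $1$ and $n$ pairwise incomparable elements $a_1,\dots,a_n$ (with $0<a_i<1$ for all $i$). For each $i$ and any two distinct indices $j,k$ different from $i$, one has $\chi_{a_i}(x)=\big((x\wedge a_i)\vee a_j\big)\wedge\big((x\wedge a_i)\vee a_k\big)$ for all $x\in M_n$. Consequently $\mathsf{C}(M_n)=\mathsf{Pol}_{0,1}(M_n)$.
   Context: For $a\in L$, $\chi_a:L\to L$ is defined by $\chi_a(x)=1$ if $x\ge a$ and $x\ne0$, and $\chi_a(x)=0$ otherwise. An $n$-ary aggregation function on a bounded lattice $L$ ($n\ge1$) is a nondecreasing map $A:L^n\to L$ with $A(0,\dots,0)=0$, $A(1,\dots,1)=1$; $\mathsf{C}(L)$ is the set of all of them. Polynomials on $L$ are functions $L^n\to L$ built from projections and constants by finitely many pointwise joins and meets; $\mathsf{Pol}_{0,1}(L)$ is the set of polynomials preserving $0$ and $1$. *)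

From mathcomp Require Import all_boot.
Set Implicit Arguments. Unset Strict Implicit. Unset Printing Implicit Defensive.

Inductive Mn (n : nat) : Type := MBot | MTop | MAtom of 'I_n.
Arguments MBot {n}. Arguments MTop {n}.

Definition leM n (x y : Mn n) : bool :=
  match x, y with
  | MBot, _ => true
  | _, MTop => true
  | MAtom i, MAtom j => i == j
  | _, _ => false
  end.

Definition isBot n (x : Mn n) : bool := if x is MBot then true else false.

Definition meetM n (x y : Mn n) : Mn n :=
  if leM x y then x else if leM y x then y else MBot.
Definition joinM n (x y : Mn n) : Mn n :=
  if leM x y then y else if leM y x then x else MTop.

Definition chi n (a x : Mn n) : Mn n :=
  if leM a x && ~~ isBot x then MTop else MBot.

Definition is_aggregation n k (A : ('I_k -> Mn n) -> Mn n) : Prop :=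
  [/\ (forall x y : 'I_k -> Mn n, (forall i, leM (x i) (y i)) -> leM (A x) (A y)),
      A (fun _ => MBot) = MBot
    & A (fun _ => MTop) = MTop].

Inductive pterm (n k : nat) : Type :=
  | PVar of 'I_k
  | PConst of Mn n
  | PJoin of pterm n k & pterm n k
  | PMeet of pterm n k & pterm n k.

Fixpoint peval n k (p : pterm n k) (x : 'I_k -> Mn n) : Mn n :=
  match p with
  | PVar i => x i
  | PConst c => c
  | PJoin p q => joinM (peval p x) (peval q x)
  | PMeet p q => meetM (peval p x) (peval q x)
  end.

Definition is_pol01 n k (A : ('I_k -> Mn n) -> Mn n) : Prop :=
  (exists p : pterm n k, forall x, A x = peval p x)
  /\ A (fun _ => MBot) = MBot /\ A (fun _ => MTop) = MTop.

(* A nondecreasing A on a finite lattice is the join, over all points c, of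
   A(c) /\ [x >= c], and [x >= c] is the meet of the indicators [x_i >= c_i]; so A is a
   polynomial as soon as every indicator [y >= c] is a unary polynomial.  In M_n with
   n >= 3 this holds: [y >= a_i] = chi_{a_i}(y), which the identity of the statement
   writes as a polynomial, [y >= 1] = chi_{a_1}(y) /\ chi_{a_2}(y), and [y >= 0] = 1.
   Conversely, lattice polynomials are nondecreasing. *)

From HB Require Import structures.
From mathcomp Require Import all_boot.
Set Implicit Arguments. Unset Strict Implicit. Unset Printing Implicit Defensive.

Section MnFinite.
Variable n : nat.

Definition Mn_encode (x : Mn n) : option (option 'I_n) :=
  match x with MBot => None | MTop => Some None | MAtom i => Some (Some i) end.
Definition Mn_decode (o : option (option 'I_n)) : Mn n :=
  match o with None => MBot | Some None => MTop | Some (Some i) => MAtom i end.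
Lemma Mn_encodeK : cancel Mn_encode Mn_decode. Proof. by case. Qed.

End MnFinite.

HB.instance Definition _ n := Finite.copy (Mn n) (can_type (@Mn_encodeK n)).

Section MnLattice.
Variable n : nat.
Implicit Types x y z : Mn n.

Lemma leM_refl x : leM x x.
Proof. by case: x => //= i; rewrite eqxx. Qed.

Lemma leM_trans x y z : leM x y -> leM y z -> leM x z.
Proof. by case: x => [||i]; case: y => [||j]; case: z => [||l] //= /eqP->. Qed.

Lemma leM_anti x y : leM x y -> leM y x -> x = y.
Proof. by case: x => [||i]; case: y => [||j] //= /eqP->. Qed.

Lemma leM_meet x y z : leM z (meetM x y) = leM z x && leM z y.
Proof.
rewrite /meetM; case: x => [||i]; case: y => [||j]; case: z => [||l] //=;
  by repeat (case: eqP => //= ?; subst); rewrite ?eqxx.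
Qed.

Lemma leM_join x y z : leM (joinM x y) z = leM x z && leM y z.
Proof.
rewrite /joinM; case: x => [||i]; case: y => [||j]; case: z => [||l] //=;
  by repeat (case: eqP => //= ?; subst); rewrite ?eqxx.
Qed.

Lemma leM_join2 x x' y y' : leM x x' -> leM y y' -> leM (joinM x y) (joinM x' y').
Proof.
move=> le_x le_y; have := leM_refl (joinM x' y'); rewrite !leM_join => /andP[lx ly].
by rewrite (leM_trans le_x lx) (leM_trans le_y ly).
Qed.

Lemma leM_meet2 x x' y y' : leM x x' -> leM y y' -> leM (meetM x y) (meetM x' y').
Proof.
move=> le_x le_y; have := leM_refl (meetM x y); rewrite !leM_meet => /andP[xl yl].
by rewrite (leM_trans xl le_x) (leM_trans yl le_y).
Qed.

Lemma meetMT x : meetM x MTop = x. Proof. by case: x. Qed.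
Lemma meetM0 x : meetM x MBot = MBot. Proof. by case: x. Qed.

Lemma chi_atomE (i : 'I_n) y : chi (MAtom i) y = if leM (MAtom i) y then MTop else MBot.
Proof. by rewrite /chi; case: y => //= l; rewrite andbT. Qed.

Lemma chi_atom_polynomial (i j k : 'I_n) : j != i -> k != i -> j != k ->
  forall x : Mn n,
    chi (MAtom i) x =
    meetM (joinM (meetM x (MAtom i)) (MAtom j)) (joinM (meetM x (MAtom i)) (MAtom k)).
Proof.
move=> + + + x; rewrite chi_atomE /meetM /joinM.
by case: x => [||l] /=; repeat (case: eqP => //= ?; subst); rewrite ?eqxx.
Qed.

End MnLattice.

Section Polynomials.
Variables n k : nat.
Implicit Types (x y : 'I_k -> Mn n) (p : pterm n k).

Lemma peval_monotone p x y :
  (forall i, leM (x i) (y i)) -> leM (peval p x) (peval p y).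
Proof.
move=> le_xy; elim: p => [i|c|p IHp q IHq|p IHp q IHq] /=.
- exact: le_xy.
- exact: leM_refl.
- exact: leM_join2.
- exact: leM_meet2.
Qed.

Definition PJoins (ps : seq (pterm n k)) : pterm n k := foldr (@PJoin n k) (PConst k MBot) ps.
Definition PMeets (ps : seq (pterm n k)) : pterm n k := foldr (@PMeet n k) (PConst k MTop) ps.

Lemma peval_PJoins_le (I : Type) (s : seq I) (f : I -> pterm n k) x z :
  leM (peval (PJoins (map f s)) x) z = all (fun i => leM (peval (f i) x) z) s.
Proof. by elim: s => //= i s IH; rewrite leM_join IH. Qed.

End Polynomials.

Section Representation.
Variables n k : nat.
Implicit Types x : 'I_k -> Mn n.

Definition upper_indicator (c y : Mn n) : Mn n := if leM c y then MTop else MBot.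

Variable ind : Mn n -> pterm n k -> pterm n k.
Hypothesis indE : forall c v x, peval (ind c v) x = upper_indicator c (peval v x).

Definition cone_term (c : 'I_k -> Mn n) : pterm n k :=
  PMeets [seq ind (c i) (PVar n i) | i <- enum 'I_k].

Lemma cone_termE c x :
  peval (cone_term c) x = if all (fun i => leM (c i) (x i)) (enum 'I_k) then MTop else MBot.
Proof.
rewrite /cone_term; elim: (enum 'I_k) => [|i s IH] //=.
by rewrite indE IH /upper_indicator /=; case: leM; case: all.
Qed.

Definition monotone_term (A : ('I_k -> Mn n) -> Mn n) : pterm n k :=
  PJoins [seq PMeet (PConst k (A c)) (cone_term c) | c : {ffun 'I_k -> Mn n}].

Lemma monotone_termE (A : ('I_k -> Mn n) -> Mn n) :
  (forall x y, (forall i, leM (x i) (y i)) -> leM (A x) (A y)) ->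
  forall x, A x = peval (monotone_term A) x.
Proof.
move=> monoA x; apply: leM_anti.
- have term_x : leM (A x) (peval (PMeet (PConst k (A (finfun x))) (cone_term (finfun x))) x).
    rewrite /= cone_termE; case: allP => [_|[]]; last by move=> i _; rewrite ffunE leM_refl.
    by rewrite meetMT; apply: monoA => i; rewrite ffunE leM_refl.
  apply: leM_trans term_x _.
  have := leM_refl (peval (monotone_term A) x).
  rewrite {1}/monotone_term peval_PJoins_le => /allP le_join.
  by apply: (le_join (finfun x)); rewrite mem_enum.
- rewrite peval_PJoins_le; apply/allP => c _ /=.
  rewrite cone_termE; case: allP => [le_cx|_]; last by rewrite meetM0.
  by rewrite meetMT; apply: monoA => i; apply: le_cx; rewrite mem_enum.
Qed.

End Representation.

Section AtLeastThreeAtoms.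
Variable n : nat.
Hypothesis n_ge3 : 2 < n.

Let atom0 : 'I_n := Ordinal (ltn_trans (isT : 0 < 2) n_ge3).
Let atom1 : 'I_n := Ordinal (ltn_trans (isT : 1 < 2) n_ge3).
Let atom2 : 'I_n := Ordinal n_ge3.

Definition other_atoms (a : 'I_n) : 'I_n * 'I_n :=
  if a == atom0 then (atom1, atom2) else if a == atom1 then (atom0, atom2) else (atom0, atom1).

Lemma other_atomsP a :
  [/\ (other_atoms a).1 != a, (other_atoms a).2 != a & (other_atoms a).1 != (other_atoms a).2].
Proof.
rewrite /other_atoms.
case: (eqVneq a atom0) => [->|a0] /=; first by split; rewrite -?(inj_eq val_inj).
case: (eqVneq a atom1) => [->|a1] /=; first by split; rewrite -?(inj_eq val_inj).
by split; rewrite // eq_sym.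
Qed.

Variable k : nat.

Definition atom_indicator (a : 'I_n) (v : pterm n k) : pterm n k :=
  let va := PMeet v (PConst k (MAtom a)) in
  PMeet (PJoin va (PConst k (MAtom (other_atoms a).1)))
        (PJoin va (PConst k (MAtom (other_atoms a).2))).

Lemma atom_indicatorE a v x :
  peval (atom_indicator a v) x = upper_indicator (MAtom a) (peval v x).
Proof. by have [j_a k_a j_k] := other_atomsP a; rewrite /= -chi_atom_polynomial // chi_atomE. Qed.

Definition indicator_term (c : Mn n) (v : pterm n k) : pterm n k :=
  match c with
  | MBot => PConst k MTop
  | MTop => PMeet (atom_indicator atom0 v) (atom_indicator atom1 v)
  | MAtom a => atom_indicator a v
  end.

Lemma indicator_termE c v x :
  peval (indicator_term c v) x = upper_indicator c (peval v x).
Proof.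
case: c => [||a]; [by [] | | exact: atom_indicatorE].
rewrite -[LHS]/(meetM (peval (atom_indicator atom0 v) x) (peval (atom_indicator atom1 v) x)).
rewrite !atom_indicatorE /upper_indicator.
by case: (peval v x) => [||l] //=; case: (eqVneq atom0 l) => [<-|] //=; rewrite -(inj_eq val_inj).
Qed.

End AtLeastThreeAtoms.

Theorem mainTheorem9 (n : nat) (hn : 3 <= n) :
  (forall i j k : 'I_n, j != i -> k != i -> j != k ->
     forall x : Mn n,
       chi (MAtom i) x =
       meetM (joinM (meetM x (MAtom i)) (MAtom j))
             (joinM (meetM x (MAtom i)) (MAtom k)))
  /\
  (forall (k : nat), 1 <= k ->
     forall A : ('I_k -> Mn n) -> Mn n,
       is_aggregation A <-> is_pol01 A).
Proof.
split; first exact: chi_atom_polynomial.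
move=> k _ A; split.
- case=> monoA A0 A1; split=> //.
  exists (monotone_term (@indicator_term n hn k) A).
  exact: (monotone_termE (@indicator_termE n hn k) monoA).
- case=> [[p Ap] [A0 A1]]; split=> // x y le_xy.
  by rewrite !Ap; apply: peval_monotone.
Qed.
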